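(* Let $n\ge 0$ be an integer and let $a,b\in\mathbb{C}$ with $a\neq 0$. Then \[ \sum_{k=0}^n\frac{(-1)^k}{1+k}\binom{a+k}{k}\binom{b+n}{n-k}=\frac{1}{a}\binom{b+n}{1+n}-\frac{1}{a}\binom{b-a+n}{1+n}. \]
   Context: For $x\in\mathbb{C}$ and an integer $m\ge0$, the generalized binomial coefficient is $\binom{x}{m}=\frac{x(x-1)\cdots(x-m+1)}{m!}$ (with $\binom{x}{0}=1$). *)

From HB Require Import structures.
From mathcomp Require Import all_boot all_order all_algebra.
Set Implicit Arguments. Unset Strict Implicit. Unset Printing Implicit Defensive.
Import Order.TTheory GRing.Theory Num.Theory.
Local Open Scope ring_scope.

Definition gbinom (R : fieldType) (x : R) (m : nat) : R :=
  (\prod_(i < m) (x - i%:R)) / (m`!)%:R.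

From HB Require Import structures.
From mathcomp Require Import all_boot all_order all_algebra.
From mathcomp Require Import ring.
Import Order.TTheory GRing.Theory Num.Theory.
Local Open Scope ring_scope.

(* Upper negation and absorption turn the k-th summand into
   [-(1/a) binom(-a, k+1) binom(b+n, n-k)], so the sum is Vandermonde's
   convolution [binom(-a + b+n, n+1)] with its k = -1 term [binom(b+n, n+1)]
   removed. *)

Section GeneralizedBinomial.
Variable R : numFieldType.
Implicit Types (x y : R) (m k : nat).

Lemma gbinom0 x : gbinom x 0 = 1.
Proof. by rewrite /gbinom big_ord0 divr1. Qed.

Lemma mul_gbinom_diag x m : (m.+1)%:R * gbinom x m.+1 = x * gbinom (x - 1) m.
Proof.
rewrite /gbinom big_ord_recl /= factS natrM subr0.
have -> : \prod_(i < m) (x - (bump 0 i)%:R) = \prod_(i < m) (x - 1 - i%:R).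
  by apply: eq_bigr => i _; rewrite /bump /= add1n -natr1; ring.
have fact_neq0 : (m`!)%:R != 0 :> R by rewrite pnatr_eq0 -lt0n fact_gt0.
have succ_neq0 : (m.+1)%:R != 0 :> R by rewrite pnatr_eq0.
by field; rewrite fact_neq0 /= addrC natr1.
Qed.

Lemma gbinomN x k : gbinom (- x - 1) k = (-1) ^+ k * gbinom (x + k%:R) k.
Proof.
rewrite /gbinom mulrA; congr (_ / _).
rewrite (reindex_inj rev_ord_inj) /= -[in (-1) ^+ k](card_ord k) -prodr_const.
rewrite -big_split /=; apply: eq_bigr => i _.
by rewrite natrB ?ltn_ord // -natr1; ring.
Qed.

Lemma gbinomN_diag x k :
  (k.+1)%:R * gbinom (- x) k.+1 = - x * ((-1) ^+ k * gbinom (x + k%:R) k).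
Proof. by rewrite mul_gbinom_diag gbinomN. Qed.

Lemma gbinom_Vandermonde m x y :
  \sum_(j < m.+1) gbinom x j * gbinom y (m - j) = gbinom (x + y) m.
Proof.
elim: m x y => [|m IH] x y.
  by rewrite big_ord_recl big_ord0 !gbinom0 addr0 mulr1.
apply: (@mulfI _ (m.+1)%:R); first by rewrite pnatr_eq0.
have -> : (m.+1)%:R * gbinom (x + y) m.+1
    = x * gbinom (x - 1 + y) m + y * gbinom (x + (y - 1)) m.
  have -> : x - 1 + y = x + y - 1 by ring.
  have -> : x + (y - 1) = x + y - 1 by ring.
  by rewrite mul_gbinom_diag mulrDl.
rewrite -!IH !mulr_sumr.
(* split the weight m+1 of the j-th term as j + (m+1-j) and absorb each part *)
have -> : \sum_(j < m.+2) (m.+1)%:R * (gbinom x j * gbinom y (m.+1 - j))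
    = \sum_(j < m.+2) (j%:R * gbinom x j) * gbinom y (m.+1 - j)
    + \sum_(j < m.+2) gbinom x j * ((m.+1 - j)%:R * gbinom y (m.+1 - j)).
  rewrite -big_split /=; apply: eq_bigr => j _.
  by rewrite (natrB _ (ltn_ord j : (j <= m.+1)%N)); ring.
congr (_ + _).
  rewrite big_ord_recl /= !mul0r add0r; apply: eq_bigr => j _.
  by rewrite /bump /= add1n mul_gbinom_diag subSS; ring.
rewrite big_ord_recr /= subnn mul0r mulr0 addr0; apply: eq_bigr => j _.
by rewrite (subSn (ltn_ord j : (j <= m)%N)) mul_gbinom_diag; ring.
Qed.

Lemma sum_gbinomS_Vandermonde n x y :
  \sum_(k < n.+1) gbinom x k.+1 * gbinom y (n - k)
  = gbinom (x + y) n.+1 - gbinom y n.+1.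
Proof.
rewrite -(gbinom_Vandermonde n.+1 x y) [in RHS]big_ord_recl gbinom0 mul1r.
by rewrite subn0 addrAC subrr add0r.
Qed.

End GeneralizedBinomial.

Theorem mainTheorem15 (C : numClosedFieldType) (n : nat) (a b : C) (ha : a != 0) :
  \sum_(k < n.+1) ((-1) ^+ k / (1 + k%:R)) * gbinom (a + k%:R) k
                    * gbinom (b + n%:R) (n - k)
  = a^-1 * gbinom (b + n%:R) n.+1 - a^-1 * gbinom (b - a + n%:R) n.+1.
Proof.
have summand k : (-1) ^+ k / (1 + k%:R) * gbinom (a + k%:R) k
    = - a^-1 * gbinom (- a) k.+1.
  have succ_neq0 : (k.+1)%:R != 0 :> C by rewrite pnatr_eq0.
  apply: (mulfI succ_neq0); rewrite [RHS]mulrCA gbinomN_diag -natr1 addrC.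
  by field; rewrite ha addrC natr1.
under eq_bigr do rewrite summand -mulrA.
rewrite -mulr_sumr sum_gbinomS_Vandermonde.
rewrite (_ : - a + (b + n%:R) = b - a + n%:R); last by ring.
ring.
Qed.
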